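(* Let $G$ be a graph with $n$ nodes and graph Laplacian $\mathbf{L}$, and let $\mathbf{L}=\mathbf{U}\mathbf{\Sigma}\mathbf{U}^T$ be an eigendecomposition of $\mathbf{L}$. Then for any $n\times n$ permutation matrix $\mathbf{M}$, the matrix $\mathbf{U}\mathbf{\Sigma}^{1/2}\mathbf{M}$ is adjacency-identifying.
   Context: Graphs are finite, undirected, without self-loops and without isolated nodes; $\mathbf{L}=\mathbf{D}-\mathbf{A}(G)$ with $\mathbf{D}$ the degree matrix and $\mathbf{A}(G)$ the adjacency matrix. In the eigendecomposition, $\mathbf{U}$ is orthogonal (columns are orthonormal eigenvectors) and $\mathbf{\Sigma}$ is diagonal with the (nonnegative) eigenvalues. $d_k>0$ is a fixed constant. A matrix $\mathbf{P}\in\mathbb{R}^{n\times e}$ is adjacency-identifying if there exist $\mathbf{W}^Q,\mathbf{W}^K\in\mathbb{R}^{e\times e}$ such that $\tilde{\mathbf{P}}=\frac{1}{\sqrt{d_k}}\mathbf{P}\mathbf{W}^Q(\mathbf{P}\mathbf{W}^K)^T$ satisfies $\tilde{\mathbf{P}}_{ij}=\max_k\tilde{\mathbf{P}}_{ik}\iff\mathbf{A}(G)_{ij}=1$ for all $i,j$. *)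

From HB Require Import structures.
From mathcomp Require Import all_boot all_order all_algebra all_fingroup.
Set Implicit Arguments. Unset Strict Implicit. Unset Printing Implicit Defensive.
Import Order.TTheory GRing.Theory Num.Theory.
Local Open Scope ring_scope.

Definition simple_graph n (e : rel 'I_n) : Prop :=
  (forall i j, e i j = e j i) /\ (forall i, ~~ e i i).
Definition no_isolated n (e : rel 'I_n) : Prop :=
  forall i, exists j, e i j.

Definition adjmx (R : nzRingType) n (e : rel 'I_n) : 'M[R]_n :=
  \matrix_(i, j) (e i j)%:R.
Definition degmx (R : nzRingType) n (e : rel 'I_n) : 'M[R]_n :=
  diag_mx (\row_i \sum_j adjmx R e i j).
Definition laplacian (R : nzRingType) n (e : rel 'I_n) : 'M[R]_n :=
  degmx R e - adjmx R e.

(* Adjacency-identifying (for a fixed constant dk > 0). "Ptilde_ij = max_k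
   Ptilde_ik" is written out as "Ptilde_ij is >= every Ptilde_ik". *)
Definition adjacency_identifying (R : rcfType) (dk : R) n m (e : rel 'I_n)
    (P : 'M[R]_(n, m)) : Prop :=
  exists WQ WK : 'M[R]_m,
    let Pt := (Num.sqrt dk)^-1 *: ((P *m WQ) *m (P *m WK)^T) in
    forall i j, (forall k, Pt i k <= Pt i j) <-> adjmx R e i j = 1.

(* With W^Q = 1 and W^K = -1 the score matrix is -(1/sqrt dk) P P^T, and
   P P^T = U Sigma U^T = L because permutation matrices are orthogonal and
   Sigma^(1/2) Sigma^(1/2) = Sigma.  In row i of -L the diagonal entry is
   -deg i <= -1 (no isolated nodes), the other entries are 1 at neighbours
   and 0 elsewhere, so the row maximum 1 is attained exactly at neighbours. *)
From HB Require Import structures.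
From mathcomp Require Import all_boot all_order all_algebra all_fingroup.
Import Order.TTheory GRing.Theory Num.Theory.
Local Open Scope ring_scope.

Lemma mulmx_perm_mx_tr (R : comNzRingType) m n (A : 'M[R]_(m, n)) (s : 'S_n) :
  (A *m perm_mx s) *m (A *m perm_mx s)^T = A *m A^T.
Proof.
by rewrite trmx_mul tr_perm_mx mulmxA -(mulmxA A) -perm_mxM mulgV perm_mx1 mulmx1.
Qed.

Lemma mulmx_diag_sqrt_tr (R : rcfType) m n (A : 'M[R]_(m, n)) (d : 'rV[R]_n) :
  (forall i, 0 <= d 0 i) ->
  (A *m diag_mx (map_mx Num.sqrt d)) *m (A *m diag_mx (map_mx Num.sqrt d))^T
  = A *m diag_mx d *m A^T.
Proof.
move=> d_ge0; rewrite trmx_mul tr_diag_mx mulmxA -(mulmxA A) mulmx_diag.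
by congr (A *m diag_mx _ *m _); apply/rowP => j; rewrite !mxE -expr2 sqr_sqrtr.
Qed.

Lemma adjmx_eq1 (R : nzRingType) {n} (e : rel 'I_n) i j :
  adjmx R e i j = 1 <-> e i j.
Proof.
by rewrite mxE; case: (e i j); split=> //= /eqP; rewrite eq_sym oner_eq0.
Qed.

Lemma laplacian_offdiag (R : nzRingType) {n} (e : rel 'I_n) {i j} :
  i != j -> laplacian R e i j = - (e i j)%:R.
Proof. by move=> neq_ij; rewrite !mxE (negbTE neq_ij) mulr0n sub0r. Qed.

Lemma laplacian_diag_ge1 (R : numDomainType) {n} {e : rel 'I_n} {i} :
  ~~ e i i -> (exists j, e i j) -> 1 <= laplacian R e i i.
Proof.
move=> irr_i [j e_ij]; rewrite !mxE eqxx mulr1n (negbTE irr_i) subr0.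
rewrite (bigD1 j) //= mxE e_ij -[leLHS]addr0 lerD2l.
by apply: sumr_ge0 => k _; rewrite mxE ler0n.
Qed.

Lemma argmax_row_opp_laplacian (R : numDomainType) {n} {e : rel 'I_n} {i} j :
  (forall k, ~~ e k k) -> (exists k, e i k) ->
  (forall k, - laplacian R e i k <= - laplacian R e i j) <-> e i j.
Proof.
move=> irr nbr_i.
have neq_of_e k : e i k -> i != k by apply: contraTneq => <-; apply: irr.
have diag_lt0 : - laplacian R e i i < 0.
  by rewrite oppr_lt0 (lt_le_trans ltr01) ?(laplacian_diag_ge1 R (irr i)).
have row_le1 k : - laplacian R e i k <= 1.
  have [<-|neq_ik] := eqVneq i k; first exact: le_trans (ltW diag_lt0) ler01.
  by rewrite laplacian_offdiag // opprK; case: (e i k).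
split=> [max_j|e_ij k].
- have [k e_ik] := nbr_i; have := max_j k.
  rewrite laplacian_offdiag ?neq_of_e // e_ik opprK.
  have [<-|neq_ij] := eqVneq i j.
    by move=> /(lt_le_trans ltr01)/lt_trans/(_ diag_lt0); rewrite ltxx.
  by rewrite laplacian_offdiag // opprK; case: (e i j); rewrite ?ler10.
- by rewrite (laplacian_offdiag R e (neq_of_e _ e_ij)) e_ij opprK.
Qed.

Lemma adjacency_identifying_laplacian_gram (R : rcfType) (dk : R) n
    (e : rel 'I_n) (P : 'M[R]_n) :
  0 < dk -> (forall k, ~~ e k k) -> (forall i, exists j, e i j) ->
  P *m P^T = laplacian R e -> adjacency_identifying dk e P.
Proof.
move=> dk_gt0 irr nbr gramP; exists 1%:M, (- 1%:M) => /= i j.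
rewrite mulmx1 mulmxN mulmx1 linearN mulmxN gramP.
apply: iff_trans _ (iff_sym (adjmx_eq1 R e i j)).
apply: iff_trans _ (argmax_row_opp_laplacian R j irr (nbr i)).
have c_gt0 : 0 < (Num.sqrt dk)^-1 by rewrite invr_gt0 sqrtr_gt0.
by split=> max_j k; have := max_j k; rewrite !mxE ler_pM2l.
Qed.

Theorem lemmaF9 (R : rcfType) (dk : R) (n : nat) (e : rel 'I_n)
    (U : 'M[R]_n) (d : 'rV[R]_n) (M : 'M[R]_n) :
  0 < dk ->
  simple_graph e -> no_isolated e ->
  U^T *m U = 1%:M ->
  (forall i, 0 <= d 0 i) ->
  laplacian R e = U *m diag_mx d *m U^T ->
  is_perm_mx M ->
  adjacency_identifying dk e (U *m diag_mx (map_mx Num.sqrt d) *m M).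
Proof.
move=> dk_gt0 [_ irr] nbr _ d_ge0 eigL /is_perm_mxP [s ->].
apply: adjacency_identifying_laplacian_gram => //.
by rewrite mulmx_perm_mx_tr mulmx_diag_sqrt_tr // eigL.
Qed.
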